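(* An object $(V,f,h)$ of $\mathcal R(P,I)$ is simple if and only if $f:P\to V$ is surjective and $h:V\to I$ is injective.
   Context: Let $\tilde Q$ be a finite acyclic quiver, $P$ a fixed projective representation and $I$ a fixed injective representation of $\tilde Q$ over $\mathbb C$ (finite-dimensional). The category $\mathcal R(P,I)$ has as objects triples $(V,f,h)$ with $V$ a finite-dimensional representation of $\tilde Q$, $f:P\to V$ and $h:V\to I$ morphisms of representations; a morphism $(V,f,h)\to(V',f',h')$ is a morphism of representations $g:V\to V'$ with $g\circ f=f'$ and $h'\circ g=h$. An object $(V,f,h)$ is called simple if there is no monomorphism $(V',f',h')\to(V,f,h)$ in $\mathcal R(P,I)$ that is not an isomorphism and no epimorphism $(V,f,h)\to(V'',f'',h'')$ in $\mathcal R(P,I)$ that is not an isomorphism. *)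

(* Representations of quivers over a field F,
   with vector spaces F^d (row vectors) and linear maps as matrices acting on the right. *)
From HB Require Import structures.
From mathcomp Require Import all_boot all_order all_algebra.
From mathcomp Require Import reals complex.
Set Implicit Arguments. Unset Strict Implicit. Unset Printing Implicit Defensive.
Import GRing.Theory.
Local Open Scope ring_scope.

Record quiver := Quiver {
  vert : finType;
  arr  : finType;
  src  : arr -> vert;
  tgt  : arr -> vert }.

Definition acyclic (Q : quiver) : Prop :=
  forall (a : arr Q) (s : seq (arr Q)),
    path (fun x y => tgt x == src y) a s -> tgt (last a s) != src a.

Record rep (F : fieldType) (Q : quiver) := Rep {
  rdim : vert Q -> nat;
  rmap : forall a : arr Q, 'M[F]_(rdim (src a), rdim (tgt a)) }.

Definition homfam (F : fieldType) (Q : quiver) (V W : rep F Q) :=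
  forall i : vert Q, 'M[F]_(rdim V i, rdim W i).

Definition is_hom (F : fieldType) (Q : quiver) (V W : rep F Q) (g : homfam V W) : Prop :=
  forall a : arr Q, rmap V a *m g (tgt a) = g (src a) *m rmap W a.

(* composition "first g, then h" *)
Definition hcomp (F : fieldType) (Q : quiver) (U V W : rep F Q)
  (g : homfam U V) (h : homfam V W) : homfam U W := fun i => g i *m h i.

Definition hid (F : fieldType) (Q : quiver) (V : rep F Q) : homfam V V :=
  fun i => 1%:M.

Definition heq (F : fieldType) (Q : quiver) (V W : rep F Q) (g h : homfam V W) : Prop :=
  forall i, g i = h i.

Definition rep_epi (F : fieldType) (Q : quiver) (V W : rep F Q) (e : homfam V W) : Prop :=
  is_hom e /\
  forall (U : rep F Q) (u v : homfam W U), is_hom u -> is_hom v ->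
    heq (hcomp e u) (hcomp e v) -> heq u v.

Definition rep_mono (F : fieldType) (Q : quiver) (V W : rep F Q) (m : homfam V W) : Prop :=
  is_hom m /\
  forall (U : rep F Q) (u v : homfam U V), is_hom u -> is_hom v ->
    heq (hcomp u m) (hcomp v m) -> heq u v.

Definition rep_projective (F : fieldType) (Q : quiver) (P : rep F Q) : Prop :=
  forall (V W : rep F Q) (e : homfam V W) (p : homfam P W),
    rep_epi e -> is_hom p -> exists l : homfam P V, is_hom l /\ heq (hcomp l e) p.

Definition rep_injective (F : fieldType) (Q : quiver) (I : rep F Q) : Prop :=
  forall (V W : rep F Q) (m : homfam V W) (p : homfam V I),
    rep_mono m -> is_hom p -> exists l : homfam W I, is_hom l /\ heq (hcomp m l) p.

Record robj (F : fieldType) (Q : quiver) (P I : rep F Q) := RObj {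
  oV : rep F Q;
  of_ : homfam P oV;
  oh : homfam oV I;
  of_hom : is_hom of_;
  oh_hom : is_hom oh }.

Definition is_rhom (F : fieldType) (Q : quiver) (P I : rep F Q) (X Y : robj P I)
  (g : homfam (oV X) (oV Y)) : Prop :=
  [/\ is_hom g, heq (hcomp (of_ X) g) (of_ Y) & heq (hcomp g (oh Y)) (oh X)].

Definition r_mono (F : fieldType) (Q : quiver) (P I : rep F Q) (X Y : robj P I)
  (g : homfam (oV X) (oV Y)) : Prop :=
  is_rhom g /\
  forall (Z : robj P I) (u v : homfam (oV Z) (oV X)), is_rhom u -> is_rhom v ->
    heq (hcomp u g) (hcomp v g) -> heq u v.

Definition r_epi (F : fieldType) (Q : quiver) (P I : rep F Q) (X Y : robj P I)
  (g : homfam (oV X) (oV Y)) : Prop :=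
  is_rhom g /\
  forall (Z : robj P I) (u v : homfam (oV Y) (oV Z)), is_rhom u -> is_rhom v ->
    heq (hcomp g u) (hcomp g v) -> heq u v.

Definition r_iso (F : fieldType) (Q : quiver) (P I : rep F Q) (X Y : robj P I)
  (g : homfam (oV X) (oV Y)) : Prop :=
  is_rhom g /\
  exists g' : homfam (oV Y) (oV X),
    [/\ is_rhom g', heq (hcomp g g') (hid (oV X)) & heq (hcomp g' g) (hid (oV Y))].

Definition r_simple (F : fieldType) (Q : quiver) (P I : rep F Q) (X : robj P I) : Prop :=
  (forall (Y : robj P I) (g : homfam (oV Y) (oV X)), r_mono g -> r_iso g) /\
  (forall (Y : robj P I) (g : homfam (oV X) (oV Y)), r_epi g -> r_iso g).

Definition hsurj (F : fieldType) (Q : quiver) (V W : rep F Q) (g : homfam V W) : Prop :=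
  forall (i : vert Q) (y : 'rV[F]_(rdim W i)), exists x : 'rV[F]_(rdim V i), x *m g i = y.

Definition hinj (F : fieldType) (Q : quiver) (V W : rep F Q) (g : homfam V W) : Prop :=
  forall (i : vert Q) (x y : 'rV[F]_(rdim V i)), x *m g i = y *m g i -> x = y.

From HB Require Import structures.
From mathcomp Require Import all_boot all_order all_algebra.
From mathcomp Require Import reals complex.
Set Implicit Arguments. Unset Strict Implicit. Unset Printing Implicit Defensive.
Import GRing.Theory.
Local Open Scope ring_scope.

(* Monomorphisms of R(P,I) are injective: if g : Y -> X has a nonzero kernel
   K, then the two maps Y (+) (K,0,0) -> Y given by [1; 0] and [1; incl] are
   distinct morphisms of R(P,I) equalized by g.  Dually, epimorphisms are
   surjective, using Y -> Y (+) (Y / im g, 0, 0).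
   If f_X is onto and h_X is one-to-one, then every morphism g into X is onto
   (f_X = f_Y g) and every morphism out of X is one-to-one (h_X = g h_Y), so
   monos into X and epis out of X are bijective, hence isomorphisms.
   Conversely, the inclusion of (im f_X, f_X, h_X|) into X is a mono, and the
   corestriction of X onto (im h_X, f_X h_X, incl) is an epi; simplicity makes
   them isomorphisms, so f_X is onto and h_X is one-to-one. *)

Section MatrixFacts.
Variable F : fieldType.

Lemma row_free_injP m n (A : 'M[F]_(m, n)) :
  row_free A <-> forall x y : 'rV_m, x *m A = y *m A -> x = y.
Proof.
split=> [freeA x y | injA]; first exact: row_free_inj.
rewrite -kermx_eq0; apply/eqP/row_matrixP => i.
by rewrite row0; apply: injA; rewrite -row_mul mulmx_ker row0 mul0mx.
Qed.

Lemma row_full_surjP m n (A : 'M[F]_(m, n)) :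
  row_full A <-> forall y : 'rV_n, exists x, x *m A = y.
Proof.
split=> [fullA y | surjA].
  by exists (y *m pinvmx A); rewrite mulmxKpV // submx_full.
rewrite -sub1mx; apply/row_subP => i.
by have [x <-] := surjA (row i 1%:M); exact: submxMl.
Qed.

Lemma pinvmxK_full m n (A : 'M[F]_(m, n)) : row_full A -> pinvmx A *m A = 1%:M.
Proof. by rewrite -sub1mx => /mulmxKpV; rewrite mul1mx. Qed.

Lemma mulmx_pinv_free_full m n (A : 'M[F]_(m, n)) :
  row_free A -> row_full A -> A *m pinvmx A = 1%:M.
Proof.
move=> freeA fullA; apply: (row_free_inj freeA).
by rewrite /= -mulmxA pinvmxK_full // mulmx1 mul1mx.
Qed.

Lemma corestr_rowK p m n (S : 'M[F]_(m, n)) (A : 'M_(p, n)) :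
  (A <= S)%MS -> A *m pinvmx (row_base S) *m row_base S = A.
Proof. by move=> sAS; rewrite mulmxKpV // eq_row_base. Qed.

Lemma row_full_corestr m n (A : 'M[F]_(m, n)) : row_full (A *m pinvmx (row_base A)).
Proof.
have := mxrankM_maxl (A *m pinvmx (row_base A)) (row_base A).
by rewrite corestr_rowK // /row_full eqn_leq rank_leq_col => ->.
Qed.

End MatrixFacts.

(* An idempotent whose left kernel is the row space of [A]; [cokermx A]
   alone has the right kernel but is not idempotent. *)
HB.lock Definition quotmx (F : fieldType) m n (A : 'M[F]_(m, n)) : 'M_n := cokermx A *m row_ebase A.

Section QuotmxFacts.
Variable F : fieldType.

Lemma quotmx_idem m n (A : 'M[F]_(m, n)) : quotmx A *m quotmx A = quotmx A.
Proof.
rewrite quotmx.unlock /cokermx -!mulmxA; congr (_ *m _).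
rewrite (mulmxA (row_ebase A)) mulmxV ?row_ebase_unit // mul1mx.
by rewrite mulmxA copid_mx_id // rank_leq_col.
Qed.

Lemma mul_quotmx_eq0 p m n (A : 'M[F]_(m, n)) (B : 'M_(p, n)) :
  (B *m quotmx A == 0) = (B <= A)%MS.
Proof.
rewrite submxE quotmx.unlock mulmxA; apply/eqP/eqP => [BA0 | ->]; last by rewrite mul0mx.
by rewrite -(mulmx1 (B *m _)) -(mulmxV (row_ebase_unit A)) mulmxA BA0 mul0mx.
Qed.

Lemma quotmx_compl_sub m n (A : 'M[F]_(m, n)) : (1%:M - quotmx A <= A)%MS.
Proof. by rewrite -mul_quotmx_eq0 mulmxBl mul1mx quotmx_idem subrr. Qed.

End QuotmxFacts.

Section Representations.
Variables (F : fieldType) (Q : quiver).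

Lemma is_hom_comp (U V W : rep F Q) (g : homfam U V) (h : homfam V W) :
  is_hom g -> is_hom h -> is_hom (hcomp g h).
Proof. by move=> homg homh a; rewrite /hcomp mulmxA homg -!mulmxA homh. Qed.

Lemma hinjP (V W : rep F Q) (g : homfam V W) : hinj g <-> forall i, row_free (g i).
Proof. by split=> injg i; apply/row_free_injP; exact: injg. Qed.

Lemma hsurjP (V W : rep F Q) (g : homfam V W) : hsurj g <-> forall i, row_full (g i).
Proof. by split=> surjg i; apply/row_full_surjP; exact: surjg. Qed.

Definition stable (V : rep F Q) (m : vert Q -> nat) (S : forall i, 'M[F]_(m i, rdim V i)) :=
  forall a, (S (src a) *m rmap V a <= S (tgt a))%MS.

Lemma stable_im (W V : rep F Q) (p : homfam W V) : is_hom p -> stable p.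
Proof. by move=> homp a; rewrite -homp submxMl. Qed.

Section SubQuotient.
Variables (V : rep F Q) (m : vert Q -> nat) (S : forall i, 'M[F]_(m i, rdim V i)).
Hypothesis stableS : stable S.

Definition subrep : rep F Q :=
  @Rep F Q (fun i => \rank (S i))
    (fun a => row_base (S (src a)) *m rmap V a *m pinvmx (row_base (S (tgt a)))).

Definition subrep_incl : homfam subrep V := fun i => row_base (S i).

Definition corestr (W : rep F Q) (p : homfam W V) : homfam W subrep :=
  fun i => p i *m pinvmx (row_base (S i)).

Lemma subrep_incl_hom : is_hom subrep_incl.
Proof.
move=> a; rewrite /subrep_incl /= corestr_rowK //.
by apply: submx_trans (stableS a); rewrite submxMr // eq_row_base.
Qed.

Lemma subrep_incl_inj : hinj subrep_incl.
Proof. by apply/hinjP => i; exact: row_base_free. Qed.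

Lemma corestrK (W : rep F Q) (p : homfam W V) :
  (forall i, (p i <= S i)%MS) -> heq (hcomp (corestr p) subrep_incl) p.
Proof. by move=> sub_pS i; exact: corestr_rowK. Qed.

Lemma corestr_hom (W : rep F Q) (p : homfam W V) :
  is_hom p -> (forall i, (p i <= S i)%MS) -> is_hom (corestr p).
Proof.
move=> homp sub_pS a; apply: (row_free_inj (row_base_free (S (tgt a)))) => /=.
have pK := corestrK sub_pS; rewrite /hcomp /subrep_incl in pK.
by rewrite -mulmxA -[RHS]mulmxA subrep_incl_hom pK mulmxA pK homp.
Qed.

Definition quotrep : rep F Q :=
  @Rep F Q (rdim V) (fun a => quotmx (S (src a)) *m rmap V a *m quotmx (S (tgt a))).

Lemma quotmx_hom : is_hom ((fun i => quotmx (S i)) : homfam V quotrep).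
Proof.
move=> a /=; rewrite !mulmxA quotmx_idem; apply/eqP.
rewrite -subr_eq0 -mulmxBl -{1}(mul1mx (rmap V a)) -mulmxBl mul_quotmx_eq0.
by apply: submx_trans (stableS a); rewrite submxMr // quotmx_compl_sub.
Qed.

End SubQuotient.

Definition dsum (V W : rep F Q) : rep F Q :=
  @Rep F Q (fun i => (rdim V i + rdim W i)%N)
    (fun a => block_mx (rmap V a) 0 0 (rmap W a)).

End Representations.

Section RObjects.
Variables (F : fieldType) (Q : quiver) (P I : rep F Q).

Lemma dsum_of_hom (Y : robj P I) (W : rep F Q) :
  is_hom ((fun i => row_mx (of_ Y i) 0) : homfam P (dsum (oV Y) W)).
Proof.
by move=> a /=; rewrite mul_mx_row mul_row_block !mulmx0 !mul0mx addr0 add0r (of_hom Y a).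
Qed.

Lemma dsum_oh_hom (Y : robj P I) (W : rep F Q) :
  is_hom ((fun i => col_mx (oh Y i) 0) : homfam (dsum (oV Y) W) I).
Proof.
by move=> a /=; rewrite mul_block_col mul_col_mx !mulmx0 !mul0mx addr0 add0r (oh_hom Y a).
Qed.

Definition robj_dsum (Y : robj P I) (W : rep F Q) : robj P I :=
  RObj (dsum_of_hom Y W) (dsum_oh_hom Y W).

Lemma dsum_col_rhom (Y : robj P I) (W : rep F Q) (k : homfam W (oV Y)) :
  is_hom k -> (forall i, k i *m oh Y i = 0) ->
  @is_rhom F Q P I (robj_dsum Y W) Y (fun i => col_mx 1%:M (k i)).
Proof.
move=> homk kh0; split=> [a | i | i]; rewrite /hcomp /=.
- by rewrite mul_block_col mul_col_mx !mul0mx mulmx1 mul1mx addr0 add0r homk.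
- by rewrite mul_row_col mulmx1 mul0mx addr0.
- by rewrite mul_col_mx mul1mx kh0.
Qed.

Lemma dsum_row_rhom (Y : robj P I) (W : rep F Q) (k : homfam (oV Y) W) :
  is_hom k -> (forall i, of_ Y i *m k i = 0) ->
  @is_rhom F Q P I Y (robj_dsum Y W) (fun i => row_mx 1%:M (k i)).
Proof.
move=> homk fk0; split=> [a | i | i]; rewrite /hcomp /=.
- by rewrite mul_row_block mul_mx_row !mulmx0 mulmx1 mul1mx addr0 add0r homk.
- by rewrite mul_mx_row mulmx1 fk0.
- by rewrite mul_row_col mul1mx mulmx0 addr0.
Qed.

Lemma zero_hom (V W : rep F Q) : is_hom ((fun _ => 0) : homfam V W).
Proof. by move=> a; rewrite mulmx0 mul0mx. Qed.

Section Morphisms.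
Variables (X Y : robj P I) (g : homfam (oV X) (oV Y)).

Lemma rhom_inj_mono : is_rhom g -> hinj g -> r_mono g.
Proof.
move=> rhomg /hinjP injg; split=> // Z u v _ _ eq_ug_vg i.
exact: (row_free_inj (injg i) (eq_ug_vg i)).
Qed.

Lemma rhom_surj_epi : is_rhom g -> hsurj g -> r_epi g.
Proof.
move=> rhomg /hsurjP surjg; split=> // Z u v _ _ eq_gu_gv i.
exact: (row_full_inj (surjg i) (eq_gu_gv i)).
Qed.

Lemma rhom_bij_iso : is_rhom g -> hinj g -> hsurj g -> r_iso g.
Proof.
move=> rhomg /hinjP injg /hsurjP surjg; split=> //.
have gK i : pinvmx (g i) *m g i = 1%:M by exact: pinvmxK_full.
have Kg i : g i *m pinvmx (g i) = 1%:M by exact: mulmx_pinv_free_full.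
case: rhomg => homg fg gh.
exists (fun i => pinvmx (g i)); split=> //; split.
- move=> a; apply: (row_free_inj (injg (tgt a))) => /=.
  by rewrite -[LHS]mulmxA gK mulmx1 -[RHS]mulmxA homg [RHS]mulmxA gK mul1mx.
- by move=> i; rewrite /hcomp -(fg i) /hcomp -mulmxA Kg mulmx1.
- by move=> i; rewrite /hcomp -(gh i) /hcomp mulmxA gK mul1mx.
Qed.

Lemma r_iso_bij : r_iso g -> hinj g /\ hsurj g.
Proof.
case=> _ [g' [_ gg' g'g]]; split.
- apply/hinjP => i; apply/row_freeP; exists (g' i); exact: gg'.
- apply/hsurjP => i; apply/row_fullP; exists (g' i); exact: g'g.
Qed.

Lemma rhom_surj : hsurj (of_ Y) -> is_rhom g -> hsurj g.
Proof.
move=> /hsurjP surjf [_ fg _]; apply/hsurjP => i.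
have fgi : of_ X i *m g i = of_ Y i := fg i.
by rewrite -sub1mx (submx_trans _ (submxMl (of_ X i) (g i))) // fgi sub1mx.
Qed.

Lemma rhom_inj : hinj (oh X) -> is_rhom g -> hinj g.
Proof.
move=> /hinjP injh [_ _ gh]; apply/hinjP => i; apply/row_free_injP => x y xy.
have ghi : g i *m oh Y i = oh X i := gh i.
by apply: (row_free_inj (injh i)); rewrite /= -ghi !mulmxA xy.
Qed.

Lemma r_mono_inj : r_mono g -> hinj g.
Proof.
case=> [[homg _ gh] monog]; apply/hinjP => i.
pose K j := kermx (g j).
have stableK : stable K.
  by move=> a; rewrite sub_kermx -mulmxA homg mulmxA mulmx_ker mul0mx.
have incl_g0 j : subrep_incl K j *m g j = 0.
  by apply/eqP; rewrite -sub_kermx eq_row_base.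
have incl_h0 j : subrep_incl K j *m oh X j = 0.
  by rewrite -(gh j) /hcomp mulmxA incl_g0 mul0mx.
have rhom_u := dsum_col_rhom (zero_hom (subrep K) (oV X)) (fun j => mul0mx _ _).
have rhom_v := dsum_col_rhom (subrep_incl_hom stableK) incl_h0.
have /eq_col_mx[_ incl0] : col_mx 1%:M 0 = col_mx 1%:M (subrep_incl K i).
  apply: (monog _ _ _ rhom_u rhom_v _ i) => j.
  by rewrite /hcomp !mul_col_mx incl_g0 mul0mx.
by rewrite -kermx_eq0 -submx0 -(eq_row_base (kermx (g i))) -[row_base _]incl0 sub0mx.
Qed.

Lemma r_epi_surj : r_epi g -> hsurj g.
Proof.
case=> [[homg fg _] epig]; apply/hsurjP => i.
have stableS := stable_im homg.
have g_quot0 j : g j *m quotmx (g j) = 0 by apply/eqP; rewrite mul_quotmx_eq0.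
have f_quot0 j : of_ Y j *m quotmx (g j) = 0.
  by rewrite -(fg j) /hcomp -mulmxA g_quot0 mulmx0.
have rhom_u := dsum_row_rhom (zero_hom (oV Y) (quotrep g)) (fun j => mulmx0 _ _).
have rhom_v := dsum_row_rhom (quotmx_hom stableS) f_quot0.
have /eq_row_mx[_ quot0] : row_mx 1%:M 0 = row_mx 1%:M (quotmx (g i)).
  apply: (epig _ _ _ rhom_u rhom_v _ i) => j.
  by rewrite /hcomp !mul_mx_row g_quot0 mulmx0.
by rewrite -sub1mx -mul_quotmx_eq0 -quot0 mulmx0.
Qed.

End Morphisms.

Lemma r_simple_of_surj (X : robj P I) : r_simple X -> hsurj (of_ X).
Proof.
case=> monoX _; have stableS := stable_im (of_hom X).
have sub_f i : (of_ X i <= of_ X i)%MS := submx_refl _.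
pose Y := RObj (corestr_hom stableS (of_hom X) sub_f)
               (is_hom_comp (subrep_incl_hom stableS) (oh_hom X)).
have rhom_incl : @is_rhom F Q P I Y X (subrep_incl (of_ X)).
  by split=> //; [exact: subrep_incl_hom | exact: corestrK].
have [_ /hsurjP surj_incl] :=
  r_iso_bij (monoX Y _ (rhom_inj_mono rhom_incl (subrep_incl_inj (S := of_ X)))).
by apply/hsurjP => i; rewrite -(eq_row_full (eq_row_base (of_ X i))); exact: surj_incl.
Qed.

Lemma r_simple_oh_inj (X : robj P I) : r_simple X -> hinj (oh X).
Proof.
case=> _ epiX; have stableS := stable_im (oh_hom X).
have sub_h i : (oh X i <= oh X i)%MS := submx_refl _.
have corestr_h := corestr_hom stableS (oh_hom X) sub_h.
pose Y := RObj (is_hom_comp (of_hom X) corestr_h) (subrep_incl_hom stableS).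
have rhom_g : @is_rhom F Q P I X Y (corestr (oh X) (oh X)).
  by split=> //; exact: corestrK.
have surj_g : hsurj (corestr (oh X) (oh X)).
  by apply/hsurjP => i; exact: row_full_corestr.
have [/hinjP inj_g _] := r_iso_bij (epiX Y _ (rhom_surj_epi rhom_g surj_g)).
apply/hinjP => i; rewrite -(corestrK sub_h i) /hcomp /row_free mxrankMfree.
  exact: inj_g.
exact: row_base_free.
Qed.

Theorem r_simpleP (X : robj P I) : r_simple X <-> hsurj (of_ X) /\ hinj (oh X).
Proof.
split=> [simpleX | [surj_f inj_h]].
  by split; [exact: r_simple_of_surj | exact: r_simple_oh_inj].
split=> [Y g monog | Y g epig].
- have [rhomg _] := monog.
  exact: rhom_bij_iso rhomg (r_mono_inj monog) (rhom_surj surj_f rhomg).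
- have [rhomg _] := epig.
  exact: rhom_bij_iso rhomg (rhom_inj inj_h rhomg) (r_epi_surj epig).
Qed.

End RObjects.

Theorem mainTheorem13 (R : realType) (Q : quiver) (hQ : acyclic Q)
  (P I : rep (complex R) Q) (hP : rep_projective P) (hI : rep_injective I)
  (X : robj P I) :
  r_simple X <-> hsurj (of_ X) /\ hinj (oh X).
Proof. exact: r_simpleP. Qed.
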